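(* Let $S,C,D,\Delta\ge1$, $\mathcal{X}\subseteq\mathbb{R}^D$ nonempty convex compact, and $f_h$, $h=1,\dots,C$, convex continuously differentiable with gradients $g_h$ satisfying $\|g_h(x)\|\le L_h$ on $\mathcal{X}$. Suppose the weights $W_{i,k}[J,h]\ge0$ are nonnegative and satisfy SLC with constant $M>0$, the server graph is complete (consensus step $x^I_{0,k+1}=\frac1S\sum_{J=1}^S x^J_{\Delta,k}$), and all servers start from the same point $x^J_{0,0}=x_{0,0}\in\mathcal{X}$; let $x_{0,k}$ be the common value of $x^J_{0,k}$. Then for all $y\in\mathcal{X}$ and all $k\ge0$, $$\|x_{0,k+1}-y\|^2\le\|x_{0,k}-y\|^2-\tfrac{2M}{S}\alpha_k\big(f(x_{0,k})-f(y)\big)+\tfrac1S\alpha_k^2C_0^2,$$ where $C_0^2=\sum_{J=1}^S\sum_{i=1}^{\Delta}\Big[\big(\sum_{h=1}^C W_{i-1,k}[J,h]L_h\big)^2+2\big(\sum_{h=1}^C W_{i-1,k}[J,h]L_h\big)\big(\sum_{t=1}^{i-1}\sum_{l=1}^C W_{t-1,k}[J,l]L_l\big)\Big].$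
   Context: $\mathcal{P}_{\mathcal{X}}$ is Euclidean projection onto $\mathcal{X}$; $f=\sum_{h=1}^Cf_h$; step sizes $\alpha_k>0$. Weight matrices $W_{i,k}\in\mathbb{R}^{S\times C}$ ($0\le i\le\Delta-1$, $k\ge0$). Symmetric Learning Condition (SLC): there is $M>0$ with $\sum_{i=1}^{\Delta}\sum_{J=1}^S W_{i-1,k}[J,h]=M$ for all $k\ge0$ and all $h$. Iteration: for each $k\ge0$ and $i=1,\dots,\Delta$, $x^J_{i,k}=\mathcal{P}_{\mathcal{X}}\big[x^J_{i-1,k}-\alpha_k\sum_{h=1}^C W_{i-1,k}[J,h]\,g_h(x^J_{i-1,k})\big]$, followed by the consensus step. *)

From mathcomp Require Import all_boot.
From Stdlib Require Import Reals.
Set Implicit Arguments. Unset Strict Implicit. Unset Printing Implicit Defensive.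
Local Open Scope R_scope.

Definition rsum (n : nat) (F : 'I_n -> R) : R := \big[Rplus/0]_(i < n) F i.

Definition vec (D : nat) := 'I_D -> R.
Definition vadd D (x y : vec D) : vec D := fun i => x i + y i.
Definition vsub D (x y : vec D) : vec D := fun i => x i - y i.
Definition vscale D (a : R) (x : vec D) : vec D := fun i => a * x i.
Definition vzero D : vec D := fun _ => 0.
Definition vsum D n (F : 'I_n -> vec D) : vec D := \big[@vadd D/@vzero D]_(j < n) F j.
Definition dot D (x y : vec D) : R := rsum (fun i => x i * y i).
Definition vnorm D (x : vec D) : R := sqrt (dot x x).

Definition convex_set D (X : vec D -> Prop) : Prop :=
  forall x y t, X x -> X y -> 0 <= t <= 1 ->
    X (vadd (vscale t x) (vscale (1 - t) y)).
Definition closed_set D (X : vec D -> Prop) : Prop :=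
  forall (u : nat -> vec D) (z : vec D),
    (forall n, X (u n)) -> (forall i, Un_cv (fun n => u n i) (z i)) -> X z.
Definition bounded_set D (X : vec D -> Prop) : Prop :=
  exists B, forall x, X x -> vnorm x <= B.
Definition compact_set D (X : vec D -> Prop) : Prop :=
  closed_set X /\ bounded_set X.

Definition convex_fun D (f : vec D -> R) : Prop :=
  forall x y t, 0 <= t <= 1 ->
    f (vadd (vscale t x) (vscale (1 - t) y)) <= t * f x + (1 - t) * f y.

Definition is_gradient D (f : vec D -> R) (g : vec D -> vec D) : Prop :=
  forall x eps, 0 < eps -> exists delta, 0 < delta /\
    forall y, vnorm (vsub y x) < delta ->
      Rabs (f y - f x - dot (g x) (vsub y x)) <= eps * vnorm (vsub y x).

Definition vcontinuous D (g : vec D -> vec D) : Prop :=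
  forall x eps, 0 < eps -> exists delta, 0 < delta /\
    forall y, vnorm (vsub y x) < delta -> vnorm (vsub (g y) (g x)) < eps.

Definition is_proj D (X : vec D -> Prop) (x z : vec D) : Prop :=
  X z /\ forall y, X y -> vnorm (vsub x z) <= vnorm (vsub x y).

Fixpoint local_iter D Sn C (P : vec D -> vec D) (alpha : nat -> R)
    (W : nat -> nat -> 'I_Sn -> 'I_C -> R) (g : 'I_C -> vec D -> vec D)
    (k : nat) (x : vec D) (J : 'I_Sn) (i : nat) : vec D :=
  match i with
  | O => x
  | i'.+1 =>
      let z := local_iter P alpha W g k x J i' in
      P (vsub z (vscale (alpha k) (vsum (fun h : 'I_C => vscale (W i' k J h) (g h z)))))
  end.

Fixpoint server_iter D Sn C (Delta : nat) (P : vec D -> vec D) (alpha : nat -> R)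
    (W : nat -> nat -> 'I_Sn -> 'I_C -> R) (g : 'I_C -> vec D -> vec D)
    (x00 : vec D) (k : nat) : vec D :=
  match k with
  | O => x00
  | k'.+1 =>
      vscale (1 / INR Sn)
        (vsum (fun J : 'I_Sn =>
           local_iter P alpha W g k' (server_iter Delta P alpha W g x00 k') J Delta))
  end.

(* C_0^2 at iteration k (indices shifted: i' = i-1, t' = t-1). *)
Definition C0sq Sn C (Delta : nat) (W : nat -> nat -> 'I_Sn -> 'I_C -> R)
    (L : 'I_C -> R) (k : nat) : R :=
  let A := fun (m : nat) (J : 'I_Sn) => rsum (fun h : 'I_C => W m k J h * L h) in
  rsum (fun J : 'I_Sn => rsum (fun i : 'I_Delta =>
     (A i J) ^ 2 + 2 * A i J * rsum (fun t : 'I_i => A t J))).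

(* Projection onto X is nonexpansive, so a step
   z' = P (z - a d) satisfies |z' - y|^2 <= |z - y|^2 - 2a<z - y, d> + a^2 |d|^2,
   where d = sum_h W[J,h] g_h(z) has norm at most A = sum_h W[J,h] L_h.
   Convexity gives <z - y, g_h(z)> >= f_h(x) - f_h(y) - L_h |z - x|, and the
   drift |z - x| after i steps is at most a times the sum of the earlier A's;
   this is the source of the cross terms in C_0^2.  Averaging the servers
   does not increase the mean squared distance to y, and the SLC collapses
   the weighted gaps f_h(x) - f_h(y) to M (f(x) - f(y)). *)

From HB Require Import structures.
From mathcomp Require Import all_boot.
From Stdlib Require Import Reals Lra FunctionalExtensionality.
Local Open Scope R_scope.
Set Implicit Arguments. Unset Strict Implicit.

Lemma Rplus_associative : associative Rplus.
Proof. by move=> x y z; rewrite Rplus_assoc. Qed.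
HB.instance Definition _ :=
  Monoid.isComLaw.Build R 0 Rplus Rplus_associative Rplus_comm Rplus_0_l.

Lemma rsum0 (F : 'I_0 -> R) : rsum F = 0.
Proof. by rewrite /rsum big_ord0. Qed.

Lemma rsumS n (F : 'I_n.+1 -> R) :
  rsum F = rsum (fun i : 'I_n => F (widen_ord (leqnSn n) i)) + F ord_max.
Proof. by rewrite /rsum big_ord_recr. Qed.

Lemma rsum_eq n (F G : 'I_n -> R) : (forall i, F i = G i) -> rsum F = rsum G.
Proof. by move=> FG; apply: eq_bigr. Qed.

Lemma rsum_plus n (F G : 'I_n -> R) : rsum (fun i => F i + G i) = rsum F + rsum G.
Proof. by rewrite /rsum big_split. Qed.

Lemma rsum_minus n (F G : 'I_n -> R) : rsum (fun i => F i - G i) = rsum F - rsum G.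
Proof.
elim: n F G => [|n IH] F G; first by rewrite !rsum0; ring.
by rewrite !rsumS IH; ring.
Qed.

Lemma rsum_scal n a (F : 'I_n -> R) : rsum (fun i => a * F i) = a * rsum F.
Proof.
elim: n F => [|n IH] F; first by rewrite !rsum0; ring.
by rewrite !rsumS IH; ring.
Qed.

Lemma rsum_const n a : rsum (fun _ : 'I_n => a) = INR n * a.
Proof.
elim: n => [|n IH]; first by rewrite rsum0 /=; ring.
by rewrite rsumS IH S_INR; ring.
Qed.

Lemma rsum_le n (F G : 'I_n -> R) : (forall i, F i <= G i) -> rsum F <= rsum G.
Proof.
move=> FG; rewrite /rsum; elim/big_ind2: _ => //; first exact: Rle_refl.
by move=> *; apply: Rplus_le_compat.
Qed.

Lemma rsum_ge0 n (F : 'I_n -> R) : (forall i, 0 <= F i) -> 0 <= rsum F.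
Proof. by move=> F0; rewrite /rsum; elim/big_ind: _ => // *; lra. Qed.

Lemma rsum_swap m n (F : 'I_m -> 'I_n -> R) :
  rsum (fun i => rsum (fun j => F i j)) = rsum (fun j => rsum (fun i => F i j)).
Proof. exact: exchange_big. Qed.

Lemma vsum_coord D n (F : 'I_n -> vec D) i : vsum F i = rsum (fun j => F j i).
Proof. by apply: (big_morph (fun v : vec D => v i)). Qed.

Section InnerProduct.
Variable D : nat.
Implicit Types x y : vec D.

Lemma dot_eq x x' y y' :
  (forall i, x i = x' i) -> (forall i, y i = y' i) -> dot x y = dot x' y'.
Proof. by move=> Ex Ey; apply: rsum_eq => i; rewrite Ex Ey. Qed.

Lemma vnorm_eq x x' : (forall i, x i = x' i) -> vnorm x = vnorm x'.
Proof. by move=> E; rewrite /vnorm (dot_eq E E). Qed.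

Lemma dot_comm x y : dot x y = dot y x.
Proof. by apply: rsum_eq => i; ring. Qed.

Lemma dot_self_ge0 x : 0 <= dot x x.
Proof. by apply: rsum_ge0 => i; nra. Qed.

Lemma dot_zero_l y : dot (@vzero D) y = 0.
Proof.
rewrite /dot (rsum_eq (G := fun _ => 0)) ?rsum_const; first ring.
by move=> i; rewrite /vzero; ring.
Qed.

Lemma vnorm_ge0 x : 0 <= vnorm x.
Proof. exact: sqrt_pos. Qed.

Lemma vnorm_sq x : vnorm x ^ 2 = dot x x.
Proof. by rewrite /= Rmult_1_r sqrt_sqrt //; apply: dot_self_ge0. Qed.

Lemma dot_scal_l a x y : dot (vscale a x) y = a * dot x y.
Proof. by rewrite /dot -rsum_scal; apply: rsum_eq => i; rewrite /vscale; ring. Qed.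

Lemma dot_plus_l x x' y : dot (vadd x x') y = dot x y + dot x' y.
Proof. by rewrite /dot -rsum_plus; apply: rsum_eq => i; rewrite /vadd; ring. Qed.

Lemma dot_vsum_l n (F : 'I_n -> vec D) y :
  dot (vsum F) y = rsum (fun h => dot (F h) y).
Proof.
rewrite /dot -rsum_swap; apply: rsum_eq => i.
by rewrite vsum_coord Rmult_comm -rsum_scal; apply: rsum_eq => h; ring.
Qed.

Lemma dot_expand x y t :
  dot (fun i => x i - t * y i) (fun i => x i - t * y i) =
  dot x x - 2 * t * dot x y + t ^ 2 * dot y y.
Proof.
rewrite /dot -!rsum_scal -rsum_minus -rsum_plus.
by apply: rsum_eq => i; ring.
Qed.

Lemma quadratic_discriminant a b c :
  0 <= a -> (forall t, 0 <= c - 2 * t * b + t ^ 2 * a) -> b ^ 2 <= a * c.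
Proof.
move=> a0 H; case: (Rle_lt_or_eq_dec _ _ a0) => [a_pos | a_eq0]; last subst a.
- have := H (b / a).
  have -> : c - 2 * (b / a) * b + (b / a) ^ 2 * a = (a * c - b ^ 2) / a
    by field; lra.
  move=> q0; have : 0 <= (a * c - b ^ 2) / a * a by apply: Rmult_le_pos; lra.
  have -> : (a * c - b ^ 2) / a * a = a * c - b ^ 2 by field; lra.
  lra.
- case: (Req_dec b 0) => [-> | b0]; first by nra.
  have := H ((c + 1) / (2 * b)).
  have -> : c - 2 * ((c + 1) / (2 * b)) * b + ((c + 1) / (2 * b)) ^ 2 * 0 = -1
    by field.
  lra.
Qed.

Lemma dot_le_vnorm x y : dot x y <= vnorm x * vnorm y.
Proof.
have disc : dot x y ^ 2 <= dot y y * dot x x.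
  apply: quadratic_discriminant; first exact: dot_self_ge0.
  by move=> t; rewrite -dot_expand; apply: dot_self_ge0.
rewrite /vnorm -sqrt_mult; try exact: dot_self_ge0.
apply: Rle_trans (Rle_abs _) _; rewrite -sqrt_Rsqr_abs.
by apply: sqrt_le_1_alt; rewrite /Rsqr; nra.
Qed.

Lemma vnorm_vscale a x : vnorm (vscale a x) = Rabs a * vnorm x.
Proof.
rewrite /vnorm dot_scal_l dot_comm dot_scal_l -Rmult_assoc.
rewrite sqrt_mult; [by rewrite -/(Rsqr a) sqrt_Rsqr_abs | nra | exact: dot_self_ge0].
Qed.

Lemma dot_ge_opp_vnorm x y : - (vnorm x * vnorm y) <= dot x y.
Proof.
have := dot_le_vnorm x (vscale (-1) y).
rewrite vnorm_vscale Rabs_Ropp Rabs_R1 dot_comm dot_scal_l dot_comm; lra.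
Qed.

Lemma vnorm_vadd_le x y : vnorm (vadd x y) <= vnorm x + vnorm y.
Proof.
rewrite -(sqrt_pow2 (vnorm x + vnorm y)); last first.
  by apply: Rplus_le_le_0_compat; apply: vnorm_ge0.
apply: sqrt_le_1_alt.
rewrite dot_plus_l (dot_comm x) (dot_comm y) !dot_plus_l -!vnorm_sq (dot_comm y x).
have := dot_le_vnorm x y; nra.
Qed.

Lemma vnorm_vsum_le n (F : 'I_n -> vec D) :
  vnorm (vsum F) <= rsum (fun j => vnorm (F j)).
Proof.
elim: n F => [|n IH] F.
  rewrite rsum0 (vnorm_eq (x' := @vzero D)) => [|i]; last by rewrite vsum_coord rsum0.
  by rewrite /vnorm dot_zero_l sqrt_0; apply: Rle_refl.
set F' := fun i : 'I_n => F (widen_ord (leqnSn n) i).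
rewrite rsumS (vnorm_eq (x' := vadd (vsum F') (F ord_max))) => [|i]; last first.
  by rewrite /vadd !vsum_coord rsumS.
by apply: Rle_trans (vnorm_vadd_le _ _) _; apply: Rplus_le_compat_r.
Qed.

End InnerProduct.

Lemma INR_gt0 n : (0 < n)%nat -> 0 < INR n.
Proof. by move=> /ltP; apply: lt_0_INR. Qed.

Section ConvexAnalysis.
Variable D : nat.
Implicit Types x y u z v : vec D.

Lemma convex_fun_chord (f : vec D -> R) x y t : convex_fun f -> 0 <= t <= 1 ->
  f (vadd x (vscale t (vsub y x))) <= f x + t * (f y - f x).
Proof.
move=> f_conv t01.
have -> : vadd x (vscale t (vsub y x)) = vadd (vscale t y) (vscale (1 - t) x).
  by apply: functional_extensionality => i; rewrite /vadd /vscale /vsub; ring.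
by have := f_conv y x t t01; lra.
Qed.

Lemma is_gradient_short_step (f : vec D -> R) g x v eps :
  is_gradient f g -> 0 < eps -> exists t, 0 < t <= 1 /\
    t * dot (g x) v <= f (vadd x (vscale t v)) - f x + t * (eps * vnorm v).
Proof.
move=> f_grad eps0; have [delta [delta0 near_x]] := f_grad x eps eps0.
have nv0 := vnorm_ge0 v.
set t := delta / (delta + vnorm v).
have t0 : 0 < t by apply: Rdiv_lt_0_compat; lra.
have t_def : t * delta + t * vnorm v = delta by rewrite /t; field; lra.
have t1 : t <= 1.
  apply: (Rmult_le_reg_r (delta + vnorm v)); first lra.
  rewrite Rmult_plus_distr_l; lra.
have tnv : t * vnorm v < delta by have := Rmult_lt_0_compat _ _ t0 delta0; lra.
exists t; split; first by split; lra.
have step : vsub (vadd x (vscale t v)) x = vscale t v.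
  by apply: functional_extensionality => i; rewrite /vsub /vadd /vscale; ring.
have lin : dot (g x) (vscale t v) = t * dot (g x) v.
  by rewrite dot_comm dot_scal_l dot_comm.
have := near_x (vadd x (vscale t v)).
rewrite step lin vnorm_vscale (Rabs_pos_eq t); last lra.
move=> /(_ tnv); move: (f (vadd x _)) => fw near.
by have := Rle_abs (- (fw - f x - t * dot (g x) v)); rewrite Rabs_Ropp; lra.
Qed.

Lemma convex_gradient_ineq (f : vec D -> R) g x y :
  convex_fun f -> is_gradient f g -> f x + dot (g x) (vsub y x) <= f y.
Proof.
move=> f_conv f_grad; apply: le_epsilon => eps eps0.
set v := vsub y x; have nv0 := vnorm_ge0 v.
have eps'0 : 0 < eps / (vnorm v + 1) by apply: Rdiv_lt_0_compat; lra.
have eps'_nv : eps / (vnorm v + 1) * vnorm v <= eps.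
  have -> : eps / (vnorm v + 1) * vnorm v = eps - eps / (vnorm v + 1) by field; lra.
  lra.
have [t [t01 slope]] := is_gradient_short_step x v f_grad eps'0.
have chord := convex_fun_chord x y f_conv (conj (Rlt_le _ _ (proj1 t01)) (proj2 t01)).
have : t * (eps / (vnorm v + 1) * vnorm v) <= t * eps.
  by apply: Rmult_le_compat_l; lra.
move=> small; have : t * dot (g x) v <= t * (f y - f x + eps).
  rewrite Rmult_plus_distr_l Rmult_minus_distr_l.
  by rewrite -/v Rmult_minus_distr_l in chord; lra.
by move=> /(Rmult_le_reg_l _ _ _ (proj1 t01)); lra.
Qed.

Lemma nonpos_of_quadratic_bound a c : 0 <= c ->
  (forall t, 0 < t <= 1 -> 2 * t * a <= t ^ 2 * c) -> a <= 0.
Proof.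
move=> c0 H; apply: Rnot_lt_le => a0.
(* At t = a / (a + c) the bound would force 2 a <= t c < a. *)
set t := a / (a + c).
have t0 : 0 < t by apply: Rdiv_lt_0_compat; lra.
have t_def : t * a + t * c = a by rewrite /t; field; lra.
have t1 : t <= 1.
  apply: (Rmult_le_reg_r (a + c)); first lra.
  rewrite Rmult_plus_distr_l; lra.
have ta := Rmult_lt_0_compat _ _ t0 a0.
have := H t (conj t0 t1).
have -> : t ^ 2 * c = t * (t * c) by ring.
have -> : t * c = a - t * a by lra.
have := Rmult_lt_0_compat _ _ t0 ta; nra.
Qed.

Lemma is_proj_variational (X : vec D -> Prop) u z y :
  convex_set X -> is_proj X u z -> X y -> dot (vsub u z) (vsub y z) <= 0.
Proof.
move=> X_conv [Xz z_min] Xy.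
apply: nonpos_of_quadratic_bound (dot_self_ge0 (vsub y z)) _ => t t01.
have := z_min _ (X_conv y z t Xy Xz ltac:(lra)).
move=> /(conj (vnorm_ge0 _)) /(pow_incr _ _ 2); rewrite !vnorm_sq.
have E i : vsub u (vadd (vscale t y) (vscale (1 - t) z)) i = vsub u z i - t * vsub y z i.
  by rewrite /vsub /vadd /vscale; ring.
rewrite (dot_eq E E) dot_expand; lra.
Qed.

Lemma is_proj_nonexpansive (X : vec D -> Prop) u z y :
  convex_set X -> is_proj X u z -> X y ->
  dot (vsub z y) (vsub z y) <= dot (vsub u y) (vsub u y).
Proof.
move=> X_conv z_proj Xy; have := is_proj_variational X_conv z_proj Xy.
set a := vsub u z; set b := vsub y z.
have E1 i : vsub z y i = vscale (-1) b i by rewrite /b /vsub /vscale; ring.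
have E2 i : vsub u y i = a i - 1 * b i by rewrite /a /b /vsub; ring.
rewrite (dot_eq (x' := vscale (-1) b) (y' := vscale (-1) b) E1 E1).
rewrite (dot_eq E2 E2) dot_expand dot_scal_l (dot_comm b) dot_scal_l.
by have := dot_self_ge0 a; lra.
Qed.

End ConvexAnalysis.

Lemma sq_mean_le_mean_sq n (a : 'I_n -> R) : (0 < n)%nat ->
  (1 / INR n * rsum a) ^ 2 <= 1 / INR n * rsum (fun j => a j ^ 2).
Proof.
move=> n0; have n_pos := INR_gt0 n0.
set m := 1 / INR n * rsum a.
have sum_a : rsum a = INR n * m by rewrite /m; field; lra.
have : 0 <= rsum (fun j => (a j - m) ^ 2) by apply: rsum_ge0 => j; apply: pow2_ge_0.
have -> : rsum (fun j => (a j - m) ^ 2) = rsum (fun j => a j ^ 2) - INR n * m ^ 2.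
  rewrite (rsum_eq (G := fun j => a j ^ 2 + (m ^ 2 - 2 * m * a j))) => [|j]; last ring.
  by rewrite rsum_plus rsum_minus rsum_const rsum_scal sum_a; ring.
move=> var0; have -> : m ^ 2 = 1 / INR n * (INR n * m ^ 2) by field; lra.
apply: Rmult_le_compat_l; last lra.
by apply: Rlt_le; apply: Rdiv_lt_0_compat; lra.
Qed.

Section Averaging.
Variable D : nat.

Lemma dist_mean_sq_le n (p : 'I_n -> vec D) y : (0 < n)%nat ->
  dot (vsub (vscale (1 / INR n) (vsum p)) y) (vsub (vscale (1 / INR n) (vsum p)) y)
  <= 1 / INR n * rsum (fun j => dot (vsub (p j) y) (vsub (p j) y)).
Proof.
move=> n0; have n_pos := INR_gt0 n0.
rewrite /dot rsum_swap -rsum_scal; apply: rsum_le => i.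
have -> : vsub (vscale (1 / INR n) (vsum p)) y i =
          1 / INR n * rsum (fun j => vsub (p j) y i).
  rewrite /vsub /vscale vsum_coord rsum_minus rsum_const; field; lra.
have := sq_mean_le_mean_sq (fun j => vsub (p j) y i) n0; rewrite /= Rmult_1_r.
by move=> /Rle_trans; apply; right; congr (_ * _); apply: rsum_eq => j; ring.
Qed.

Lemma convex_set_mean (X : vec D -> Prop) n (p : 'I_n -> vec D) :
  convex_set X -> (0 < n)%nat -> (forall j, X (p j)) ->
  X (vscale (1 / INR n) (vsum p)).
Proof.
move=> X_conv; elim: n p => [//|n IH] p _ Xp.
case: n IH p Xp => [|n] IH p Xp.
  have -> : vscale (1 / INR 1) (vsum p) = p ord0.
    apply: functional_extensionality => i.
    rewrite /vscale vsum_coord rsumS rsum0 /=.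
    have -> : (ord_max : 'I_1) = ord0 by apply: val_inj.
    by field.
  exact: Xp.
set q := fun j : 'I_n.+1 => p (widen_ord (leqnSn n.+1) j).
have n1_pos : 0 < INR n.+1 by apply: INR_gt0.
set t := INR n.+1 / INR n.+2.
have -> : vscale (1 / INR n.+2) (vsum p) =
          vadd (vscale t (vscale (1 / INR n.+1) (vsum q))) (vscale (1 - t) (p ord_max)).
  apply: functional_extensionality => i.
  rewrite /vadd /vscale !vsum_coord rsumS /t /q [INR n.+2]S_INR; field; lra.
apply: X_conv; [by apply: IH => // j; apply: Xp | exact: Xp |].
rewrite /t [INR n.+2]S_INR; split.
  by apply: Rlt_le; apply: Rdiv_lt_0_compat; lra.
by apply: (Rmult_le_reg_r (INR n.+1 + 1)); [lra | field_simplify; lra].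
Qed.

End Averaging.

Definition sum_below (n : nat) (G : nat -> R) : R := rsum (fun i : 'I_n => G i).

Lemma sum_below0 G : sum_below 0 G = 0.
Proof. exact: rsum0. Qed.

Lemma sum_belowS n G : sum_below n.+1 G = sum_below n G + G n.
Proof. by rewrite /sum_below rsumS. Qed.

Definition step_lip S C (W : nat -> nat -> 'I_S -> 'I_C -> R) (L : 'I_C -> R)
  (k : nat) (J : 'I_S) (m : nat) : R := rsum (fun h => W m k J h * L h).

Section ProjectedGradientStep.
Variables (D C : nat) (X : vec D -> Prop) (P : vec D -> vec D).
Hypotheses (X_conv : convex_set X) (P_proj : forall x, is_proj X x (P x)).

Lemma proj_step_dist_le z d a : X z -> 0 <= a ->
  vnorm (vsub (P (vsub z (vscale a d))) z) <= a * vnorm d.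
Proof.
move=> Xz a0; set u := vsub z (vscale a d).
apply: Rle_trans (sqrt_le_1_alt _ _ (is_proj_nonexpansive X_conv (P_proj u) Xz)) _.
rewrite -/(vnorm _) (vnorm_eq (x' := vscale (- a) d)) => [|i]; last first.
  by rewrite /u /vsub /vscale; ring.
by rewrite vnorm_vscale Rabs_Ropp Rabs_pos_eq //; apply: Rle_refl.
Qed.

Lemma proj_step_sq_dist_le z d a y : X y ->
  dot (vsub (P (vsub z (vscale a d))) y) (vsub (P (vsub z (vscale a d))) y) <=
  dot (vsub z y) (vsub z y) - 2 * a * dot (vsub z y) d + a ^ 2 * dot d d.
Proof.
move=> Xy; set u := vsub z (vscale a d).
apply: Rle_trans (is_proj_nonexpansive X_conv (P_proj u) Xy) _.
have E i : vsub u y i = vsub z y i - a * d i by rewrite /u /vsub /vscale; ring.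
by rewrite (dot_eq E E) dot_expand; apply: Rle_refl.
Qed.

Variables (f : 'I_C -> vec D -> R) (g : 'I_C -> vec D -> vec D) (L : 'I_C -> R).
Hypotheses (f_conv : forall h, convex_fun (f h)) (f_grad : forall h, is_gradient (f h) (g h))
  (g_bound : forall h x, X x -> vnorm (g h x) <= L h).

Lemma gradient_drift_lb h x z y r : X x -> vnorm (vsub z x) <= r ->
  f h x - f h y - L h * r <= dot (vsub z y) (g h z).
Proof.
move=> Xx zx_r.
have at_z := convex_gradient_ineq z y (f_conv h) (f_grad h).
have at_x := convex_gradient_ineq x z (f_conv h) (f_grad h).
have flip : dot (g h z) (vsub y z) = - dot (vsub z y) (g h z).
  rewrite dot_comm (dot_eq (x' := vscale (-1) (vsub z y)) (y' := g h z)) // => [|i].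
    by rewrite dot_scal_l; ring.
  by rewrite /vsub /vscale; ring.
have := dot_ge_opp_vnorm (g h x) (vsub z x).
have : vnorm (g h x) * vnorm (vsub z x) <= L h * r.
  by apply: Rmult_le_compat => //; [apply: vnorm_ge0 | apply: vnorm_ge0 | apply: g_bound].
lra.
Qed.

Lemma weighted_gradient_norm_le (w : 'I_C -> R) z :
  (forall h, 0 <= w h) -> X z ->
  vnorm (vsum (fun h => vscale (w h) (g h z))) <= rsum (fun h => w h * L h).
Proof.
move=> w0 Xz; apply: Rle_trans (vnorm_vsum_le _) _; apply: rsum_le => h.
by rewrite vnorm_vscale Rabs_pos_eq //; apply: Rmult_le_compat_l; last exact: g_bound.
Qed.

Lemma weighted_gradient_drift_lb (w : 'I_C -> R) x z y r :
  (forall h, 0 <= w h) -> X x -> vnorm (vsub z x) <= r ->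
  rsum (fun h => w h * (f h x - f h y)) - r * rsum (fun h => w h * L h) <=
  dot (vsub z y) (vsum (fun h => vscale (w h) (g h z))).
Proof.
move=> w0 Xx zx_r; rewrite dot_comm dot_vsum_l -rsum_scal -rsum_minus.
apply: rsum_le => h; rewrite dot_scal_l dot_comm.
have -> : w h * (f h x - f h y) - r * (w h * L h) = w h * (f h x - f h y - L h * r)
  by ring.
by apply: Rmult_le_compat_l; last exact: gradient_drift_lb.
Qed.

Variables (S : nat) (alpha : nat -> R) (W : nat -> nat -> 'I_S -> 'I_C -> R).
Hypothesis W_nn : forall i k J h, 0 <= W i k J h.

Lemma local_iter_in_X k x J i : X x -> X (local_iter P alpha W g k x J i).
Proof. by case: i => [//|i] _; apply: (proj1 (P_proj _)). Qed.

Variables (k : nat) (J : 'I_S) (x y : vec D).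
Hypotheses (alpha0 : 0 <= alpha k) (Xx : X x) (Xy : X y).

Local Notation z := (local_iter P alpha W g k x J).
Local Notation A := (step_lip W L k J).

Lemma local_iter_bounds i :
  vnorm (vsub (z i) x) <= alpha k * sum_below i A /\
  dot (vsub (z i) y) (vsub (z i) y) <= dot (vsub x y) (vsub x y)
    - 2 * alpha k * sum_below i (fun m => rsum (fun h => W m k J h * (f h x - f h y)))
    + alpha k ^ 2 * sum_below i (fun m => A m ^ 2 + 2 * A m * sum_below m A).
Proof.
elim: i => [|i [dist_zi sq_zi]].
  rewrite /= !sum_below0 (vnorm_eq (x' := vscale 0 x)) => [|j]; last first.
    by rewrite /vsub /vscale; ring.
  by rewrite vnorm_vscale Rabs_R0; split; lra.
set d := vsum (fun h => vscale (W i k J h) (g h (z i))).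
have -> : z i.+1 = P (vsub (z i) (vscale (alpha k) d)) by [].
have Xzi := local_iter_in_X k J i Xx.
have d_le : vnorm d <= A i by apply: weighted_gradient_norm_le.
have A0 : 0 <= A i by apply: Rle_trans d_le; apply: vnorm_ge0.
have drift := weighted_gradient_drift_lb y (W_nn i k J) Xx dist_zi.
rewrite -/d -/(A i) in drift.
rewrite !sum_belowS; split.
  set z' := P (vsub (z i) (vscale (alpha k) d)).
  rewrite (vnorm_eq (x' := vadd (vsub z' (z i)) (vsub (z i) x))) => [|j]; last first.
    by rewrite /vadd /vsub; ring.
  apply: Rle_trans (vnorm_vadd_le _ _) _.
  have := proj_step_dist_le d Xzi alpha0; rewrite -/z'.
  have : alpha k * vnorm d <= alpha k * A i by apply: Rmult_le_compat_l.
  lra.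
apply: Rle_trans (proj_step_sq_dist_le _ d _ Xy) _.
have : alpha k ^ 2 * dot d d <= alpha k ^ 2 * A i ^ 2.
  apply: Rmult_le_compat_l; first exact: pow2_ge_0.
  by rewrite -vnorm_sq; apply: pow_incr; split; first exact: vnorm_ge0.
have := Rmult_le_compat_l (2 * alpha k) _ _ ltac:(lra) drift.
move: (sum_below i A) (dot d d) => T dd.
lra.
Qed.

End ProjectedGradientStep.

Lemma slc_weighted_sum S C Delta (W : nat -> nat -> 'I_S -> 'I_C -> R) M k
    (v : 'I_C -> R) :
  (forall h, rsum (fun i : 'I_Delta => rsum (fun J : 'I_S => W i k J h)) = M) ->
  rsum (fun J => sum_below Delta (fun m => rsum (fun h => W m k J h * v h))) =
  M * rsum v.
Proof.
move=> slc; rewrite /sum_below rsum_swap.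
under rsum_eq => m do rewrite rsum_swap.
rewrite rsum_swap -rsum_scal; apply: rsum_eq => h.
rewrite -(slc h) Rmult_comm -rsum_scal; apply: rsum_eq => m.
by rewrite -rsum_scal; apply: rsum_eq => J; ring.
Qed.

Lemma server_iter_in_X S C D Delta (X : vec D -> Prop) (P : vec D -> vec D)
    alpha (W : nat -> nat -> 'I_S -> 'I_C -> R) g x00 :
  (0 < S)%nat -> convex_set X -> (forall x, is_proj X x (P x)) -> X x00 ->
  forall k, X (server_iter Delta P alpha W g x00 k).
Proof.
move=> S0 X_conv P_proj Xx00; elim=> [//|k IH] /=.
by apply: convex_set_mean => // J; apply: local_iter_in_X.
Qed.

Unset Implicit Arguments. Set Strict Implicit.

Theorem lemma6 (S C D Delta : nat)
  (HS : (0 < S)%nat) (HC : (0 < C)%nat) (HD : (0 < D)%nat) (HDelta : (0 < Delta)%nat)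
  (X : vec D -> Prop)
  (HXne : exists x, X x) (HXconv : convex_set X) (HXcomp : compact_set X)
  (P : vec D -> vec D) (HP : forall x, is_proj X x (P x))
  (f : 'I_C -> vec D -> R) (g : 'I_C -> vec D -> vec D) (L : 'I_C -> R)
  (Hfconv : forall h, convex_fun (f h))
  (Hgrad : forall h, is_gradient (f h) (g h))
  (Hgcont : forall h, vcontinuous (g h))
  (HL : forall h x, X x -> vnorm (g h x) <= L h)
  (alpha : nat -> R) (Halpha : forall k, 0 < alpha k)
  (W : nat -> nat -> 'I_S -> 'I_C -> R)
  (HWnn : forall i k J h, 0 <= W i k J h)
  (M : R) (HM : 0 < M)
  (HSLC : forall k (h : 'I_C),
     rsum (fun i : 'I_Delta => rsum (fun J : 'I_S => W i k J h)) = M)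
  (x00 : vec D) (Hx00 : X x00) :
  let F := fun x => rsum (fun h : 'I_C => f h x) in
  let xk := server_iter Delta P alpha W g x00 in
  forall (y : vec D), X y -> forall k : nat,
    vnorm (vsub (xk (k.+1)) y) ^ 2 <=
      vnorm (vsub (xk k) y) ^ 2
      - 2 * M / INR S * alpha k * (F (xk k) - F y)
      + 1 / INR S * alpha k ^ 2 * C0sq Delta W L k.
Proof.
move=> F xk y Xy k.
have Xxk := server_iter_in_X Delta alpha W g HS HXconv HP Hx00 k.
have S_pos := INR_gt0 HS.
have local_bound J := proj2 (local_iter_bounds HXconv HP Hfconv Hgrad HL HWnn
  J (Rlt_le _ _ (Halpha k)) Xxk Xy Delta).
have -> : xk k.+1 = vscale (1 / INR S)
    (vsum (fun J => local_iter P alpha W g k (xk k) J Delta)) by [].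
rewrite !vnorm_sq; apply: Rle_trans (dist_mean_sq_le _ y HS) _.
apply: Rle_trans (Rmult_le_compat_l _ _ _ _ (rsum_le local_bound)) _.
  by apply: Rlt_le; apply: Rdiv_lt_0_compat; lra.
rewrite rsum_plus rsum_minus rsum_const !rsum_scal.
have -> : rsum (fun J => sum_below Delta (fun m => step_lip W L k J m ^ 2 +
    2 * step_lip W L k J m * sum_below m (step_lip W L k J))) = C0sq Delta W L k
  by [].
rewrite (slc_weighted_sum _ (HSLC k)) /F -rsum_minus -/xk.
by right; field; lra.
Qed.
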